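(* Under the standing assumptions below, for all $c,d,e\in I$ and $k\in\{0,\dots,n\}$: if $c\prec_k d$, $c\prec_k e$ and $d\prec e$, then $d\prec_k e$.
   Context: Standing assumptions: $I$ is a finite set of weighted constraints with default values on a finite domain $D$ such that distinct constraints have distinct variable sets, $\mathcal H(I)=(\mathrm{var}(I),\{\mathrm{var}(c)\mid c\in I\})$ is $\beta$-acyclic, and $(x_1,\dots,x_n)$ is a $\beta$-elimination order of $\mathcal H(I)$ (an enumeration of $\mathrm{var}(I)$ such that for each $k$, $x_{k+1}$ is a nest point—the edges containing it are totally ordered by inclusion—of the hypergraph with vertices $\mathrm{var}(I)\setminus X_k$ and edges $\{e\setminus X_k\}\setminus\{\emptyset\}$). $X_k=\{x_1,\dots,x_k\}$. For $c,d\in I$: $c\prec d$ iff there is $k$ with $\mathrm{var}(c)\setminus X_k\subsetneq\mathrm{var}(d)\setminus X_k$; $c\preceq d$ iff $c\prec d$ or $c=d$. Relations $\prec_k$ are defined inductively: $\prec_0=\emptyset$; $c\prec_{k+1}d$ iff $c\prec_k d$ or there is $e\in I$ with $c\preceq_k e\prec d$ and $x_{k+1}\in\mathrm{var}(d)\cap\mathrm{var}(e)$; here $c\preceq_k d$ iff $c=d$ or $c\prec_k d$. *)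

From mathcomp Require Import all_boot.
Set Implicit Arguments. Unset Strict Implicit. Unset Printing Implicit Defensive.

Section BetaOrder.
Variables (V : finType) (I : finType) (var : I -> {set V}) (xs : seq V).

Definition varI : {set V} := \bigcup_(c : I) var c.

Definition Xk (k : nat) : {set V} := [set x in take k xs].

(* x_{k+1} is a nest point of the hypergraph with vertices var(I)\X_k and
   edges {var c \ X_k} \ {emptyset}: the edges containing it are totally
   ordered by inclusion. *)
Definition nest_point_at (k : nat) (x : V) : Prop :=
  forall c d : I, x \in var c :\: Xk k -> x \in var d :\: Xk k ->
    (var c :\: Xk k \subset var d :\: Xk k) \/ (var d :\: Xk k \subset var c :\: Xk k).

Definition beta_elim_order : Prop :=
  [/\ uniq xs, [set x in xs] = varI &
      forall k x, onth xs k = Some x -> nest_point_at k x ]%type.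

Definition prec (c d : I) : bool :=
  [exists k : 'I_(size xs).+1, (var c :\: Xk k) \proper (var d :\: Xk k)].

Definition preceq (c d : I) : bool := (c == d) || prec c d.

Fixpoint preck (k : nat) (c d : I) : bool :=
  match k with
  | 0 => false
  | k'.+1 =>
      preck k' c d ||
      [exists e : I, ((c == e) || preck k' c e) && prec e d &&
         (if onth xs k' is Some x then x \in var d :&: var e else false)]
  end.

Definition preceqk (k : nat) (c d : I) : bool := (c == d) || preck k c d.

End BetaOrder.

From mathcomp Require Import all_boot.
Set Implicit Arguments. Unset Strict Implicit.

(* Write R_k(c) = var c \ X_k for the residual edge of c after eliminating
   x_1, ..., x_k; residuals only shrink as k grows.  Since c < d means a strict
   inclusion R_j(c) < R_j(d) at some stage j, the reverse strict inclusion can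
   hold at no stage.  At the nest point x_{k+1}, every two residuals through it
   are comparable, hence ordered as < prescribes.  By induction on k, c <_k d
   forces R_k(c) <= R_k(d), and two successors of a common c for <=_k have
   comparable residuals.  The lemma then follows by induction on k: when
   d <_{k+1} e is not witnessed directly by x_{k+1}, the comparability of the
   residuals lets the induction hypothesis supply an intermediate edge. *)

Section BetaOrderResiduals.
Variables (V I : finType) (var : I -> {set V}) (xs : seq V).
Hypothesis xs_uniq : uniq xs.
Hypothesis xs_nest : forall k x, onth xs k = Some x -> nest_point_at var xs k x.

Local Notation res k c := (var c :\: Xk xs k).
Local Notation prec := (prec var xs).
Local Notation preck := (preck var xs).
Local Notation preceqk := (preceqk var xs).
Local Notation comparable k d g :=
  ((res k d \subset res k g) || (res k g \subset res k d)).

Lemma res_subset_mono j k a b :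
  j <= k -> res j a \subset res j b -> res k a \subset res k b.
Proof.
move=> le_jk /subsetP sub_ab; apply/subsetP=> x /setDP[xa xNk].
have xNj : x \notin Xk xs j.
  by apply: contra xNk; rewrite !inE -(take_takel xs le_jk); apply: mem_take.
have /setDP[xb _] : x \in res j b by apply: sub_ab; rewrite inE xa xNj.
by rewrite inE xb xNk.
Qed.

Lemma comparable_res_mono j k d g :
  j <= k -> comparable j d g -> comparable k d g.
Proof. by move=> le_jk /orP[] /(res_subset_mono le_jk) ->; rewrite ?orbT. Qed.

Lemma onth_notin_Xk k x : onth xs k = Some x -> x \notin Xk xs k.
Proof.
move=> xk; have lt_k : k < size xs by rewrite -onthTE xk.
have x_drop : x \in drop k xs.
  by rewrite (drop_nth x lt_k) (@onth_nth _ x _ _ _ xk) mem_head.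
move: xs_uniq; rewrite -[xs in uniq xs](cat_take_drop k) cat_uniq.
case/and3P=> _ /hasPn xNtake _.
by rewrite inE; apply: xNtake x_drop.
Qed.

Lemma mem_res_onth k x c : onth xs k = Some x -> x \in var c -> x \in res k c.
Proof. by move=> xk xc; rewrite inE xc onth_notin_Xk. Qed.

Lemma onth_res_subset k x a b : onth xs k = Some x ->
  x \in var a -> res k a \subset res k b -> x \in var b.
Proof. by move=> xk xa /subsetP/(_ x (mem_res_onth xk xa))/setDP[]. Qed.

Lemma prec_res_subset_sym k a b :
  prec a b -> res k b \subset res k a -> res k a \subset res k b.
Proof.
case/existsP=> j /properP[sub_ab [y yb yNa]] sub_ba.
have [le_jk | lt_kj] := leqP j k; first exact: res_subset_mono le_jk sub_ab.
have /subsetP/(_ y yb) := res_subset_mono (ltnW lt_kj) sub_ba.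
by rewrite (negbTE yNa).
Qed.

Lemma prec_proper_res k d g :
  k <= size xs -> res k d \proper res k g -> prec d g.
Proof. by move=> le_k dg; apply/existsP; exists (@Ordinal (size xs).+1 k le_k). Qed.

Lemma prec_onth_res_subset k x e d : onth xs k = Some x ->
  x \in var e -> x \in var d -> prec e d -> res k e \subset res k d.
Proof.
move=> xk xe xd ed.
case: (xs_nest xk (mem_res_onth xk xe) (mem_res_onth xk xd)) => //.
exact: prec_res_subset_sym.
Qed.

Lemma preckS k c d : preck k.+1 c d = preck k c d ||
  [exists f, preceqk k c f && prec f d &&
             (if onth xs k is Some x then x \in var d :&: var f else false)].
Proof. by []. Qed.

Lemma preckS_onth k x c f d : onth xs k = Some x ->
  preceqk k c f -> prec f d -> x \in var d -> x \in var f -> preck k.+1 c d.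
Proof.
move=> xk cf fd xd xf; rewrite preckS; apply/orP; right; apply/existsP; exists f.
by rewrite cf fd xk inE xd xf.
Qed.

Lemma preck_preceqk k c d : preck k c d -> preceqk k c d.
Proof. by move=> cd; rewrite /preceqk cd orbT. Qed.

Lemma prec_onth_preckS k x d e : onth xs k = Some x ->
  prec d e -> x \in var e -> x \in var d -> preck k.+1 d e.
Proof. by move=> xk; apply: preckS_onth xk _; rewrite /preceqk eqxx. Qed.

Lemma preckSP k c d : preck k.+1 c d ->
  preck k c d \/ exists f x, [/\ onth xs k = Some x, preceqk k c f,
                                  prec f d, x \in var d & x \in var f].
Proof.
rewrite preckS => /orP[|/existsP[f /andP[/andP[cf fd]]]]; first by left.
by case xk: (onth xs k) => [x|//] /setIP[xd xf]; right; exists f, x.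
Qed.

Lemma preceqkSP k c d : preceqk k.+1 c d ->
  preceqk k c d \/ exists f x, [/\ onth xs k = Some x, preceqk k c f,
                                    prec f d, x \in var d & x \in var f].
Proof.
case/orP=> [cd | /preckSP[/preck_preceqk | ?]]; last by right.
  by left; rewrite /preceqk cd.
by left.
Qed.

Lemma preck_res_subset k c d : preck k c d -> res k c \subset res k d.
Proof.
elim: k d => [//|k IH] d /preckSP[/IH | [f [x [xk cf fd xd xf]]]].
  exact: res_subset_mono.
apply: res_subset_mono (leqnSn k) _.
apply: subset_trans (prec_onth_res_subset xk xf xd fd).
by case/orP: cf => [/eqP-> | /IH].
Qed.

Lemma comparable_res_onth k x d f g : onth xs k = Some x ->
  x \in var d -> x \in var f -> prec f d ->
  comparable k f g -> comparable k d g.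
Proof.
move=> xk xd xf fd fg.
have [xg | xNg] := boolP (x \in var g).
  by case: (xs_nest xk (mem_res_onth xk xd) (mem_res_onth xk xg)) => ->; rewrite ?orbT.
case/orP: fg => [fg | gf]; first by rewrite (onth_res_subset xk xf fg) in xNg.
by rewrite (subset_trans gf (prec_onth_res_subset xk xf xd fd)) orbT.
Qed.

Lemma preceqk_res_comparable k c d g :
  preceqk k c d -> preceqk k c g -> comparable k d g.
Proof.
elim: k d g => [|k IH] d g.
  by rewrite /preceqk /= !orbF => /eqP<- /eqP<-; rewrite subxx.
have Sk := comparable_res_mono (leqnSn k).
case/preceqkSP=> [cd | [f [x [xk cf fd xd xf]]]];
case/preceqkSP=> [cg | [h [y [yk ch hg yg yh]]]].
- exact/Sk/IH.
- by rewrite orbC; apply/Sk/(comparable_res_onth yk yg yh hg); rewrite orbC; apply: IH.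
- exact/Sk/(comparable_res_onth xk xd xf fd)/IH.
- move: yk yg; rewrite xk => -[<-] xg {h ch hg yh}.
  apply: Sk.
  by case: (xs_nest xk (mem_res_onth xk xd) (mem_res_onth xk xg)) => ->; rewrite ?orbT.
Qed.

Lemma preck_prec_common_pred k c d e :
  preck k c d -> preck k c e -> prec d e -> preck k d e.
Proof.
elim: k d e => [//|k IH] d e cd ce de.
case/preckSP: cd => [cd | [f [x [xk cf fd xd xf]]]];
case/preckSP: ce => [ce | [g [y [yk cg ge ye yg]]]].
- by rewrite preckS IH.
- have [yd | yNd] := boolP (y \in var d); first exact: prec_onth_preckS yk de ye yd.
  have gNd : ~~ (res k g \subset res k d).
    by apply: contra yNd; apply: onth_res_subset yk yg.
  have := preceqk_res_comparable (preck_preceqk cd) cg; rewrite (negbTE gNd) orbF => dg.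
  have le_k : k <= size xs by rewrite ltnW // -onthTE yk.
  have {}dg : prec d g by apply: prec_proper_res le_k _; rewrite properE dg.
  have {}cg : preck k c g.
    case/orP: cg => [/eqP cg | //]; subst g.
    by rewrite preck_res_subset in gNd.
  by apply: (preckS_onth yk _ ge ye yg); rewrite /preceqk IH ?orbT.
- have [xe | xNe] := boolP (x \in var e); first exact: prec_onth_preckS xk de xe xd.
  have /orP[fe | ef] := preceqk_res_comparable cf (preck_preceqk ce).
    by rewrite (onth_res_subset xk xf fe) in xNe.
  have ed := subset_trans ef (prec_onth_res_subset xk xf xd fd).
  by rewrite (onth_res_subset xk xd (prec_res_subset_sym de ed)) in xNe.
- by move: yk ye; rewrite xk => -[<-] xe; exact: prec_onth_preckS xk de xe xd.
Qed.

End BetaOrderResiduals.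

Theorem lemma6 (V I : finType) (var : I -> {set V}) (xs : seq V)
    (Hinj : injective var)
    (Hbeta : beta_elim_order var xs)
    (c d e : I) (k : nat) (Hk : k <= size xs) :
  preck var xs k c d -> preck var xs k c e -> prec var xs d e ->
  preck var xs k d e.
Proof. by case: Hbeta => xs_uniq _ xs_nest; apply: preck_prec_common_pred. Qed.
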